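(* Let $n\ge4$. $\mathbb G^n_S$ is the orthogonal direct sum of the $n$-dimensional subspace $\mathbb{CPI}^n_S$ and the $\frac{n(n-3)}2$-dimensional subspace $\mathbb C^n_S$. Every $\mathcal G\in\mathbb G^n_S$ has a unique decomposition $\mathcal G=\mathcal G_{cpi}+\mathcal G_{cyclic}$ with $\mathcal G_{cpi}\in\mathbb{CPI}^n_S$ and $\mathcal G_{cyclic}\in\mathbb C^n_S$, these being the orthogonal projections of $\mathcal G$ onto the two subspaces.
   Context: $\mathbb G^n_S$ is the space of complete undirected weighted graphs without loops on $V_1,\dots,V_n$ with edge weights $d_{i,j}=d_{j,i}$, identified with $\mathbb R^{\binom n2}$ with the standard inner product. $\mathbb{CPI}^n_S$ is the subspace of graphs with $d_{j,k}=\omega_j+\omega_k$ for some reals $\omega_1,\dots,\omega_n$ (the closed path independent graphs). $\mathbb C^n_S$ is the span of all vectors $\mathbf b^n_{i,j,k,s}$ (distinct $i,j,k,s$) having $d_{i,j}=1,d_{j,k}=-1,d_{k,s}=1,d_{s,i}=-1$ and all other entries 0. *)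

From HB Require Import structures.
From mathcomp Require Import all_boot all_order all_algebra.
Set Implicit Arguments. Unset Strict Implicit. Unset Printing Implicit Defensive.
Import Order.TTheory GRing.Theory Num.Theory.
Local Open Scope ring_scope.

(* Edges of the complete graph on vertices 'I_n: pairs (a,b) with a < b.
   Each unordered pair {V_a, V_b} appears exactly once. *)
Definition edge (n : nat) := {p : 'I_n * 'I_n | (p.1 < p.2)%N}.

Definition graphS (R : realFieldType) (n : nat) := {ffun edge n -> R^o}.

Definition same_edge (n : nat) (a b x y : 'I_n) : bool :=
  ((a == x) && (b == y)) || ((a == y) && (b == x)).

Definition gdot (R : realFieldType) (n : nat) (G H : graphS R n) : R :=
  \sum_(e : edge n) G e * H e.

Definition cpi_graph (R : realFieldType) (n : nat) (w : {ffun 'I_n -> R^o})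
  : graphS R n := [ffun e : edge n => w (val e).1 + w (val e).2].

Definition CPI_S (R : realFieldType) (n : nat) : {vspace graphS R n} :=
  limg (linfun (@cpi_graph R n)).

Definition bvec (R : realFieldType) (n : nat) (i j k s : 'I_n) : graphS R n :=
  [ffun e : edge n =>
     let a := (val e).1 in let b := (val e).2 in
     if same_edge a b i j then 1
     else if same_edge a b j k then -1
     else if same_edge a b k s then 1
     else if same_edge a b s i then -1
     else 0].

Definition distinct4 (n : nat) (q : 'I_n * 'I_n * 'I_n * 'I_n) : bool :=
  let: (i, j, k, s) := q in
  [&& i != j, i != k, i != s, j != k, j != s & k != s].

Definition C_S (R : realFieldType) (n : nat) : {vspace graphS R n} :=
  <<[seq (let: (i, j, k, s) := q in bvec R i j k s)
     | q <- enum (@distinct4 n)]>>%VS.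

From HB Require Import structures.
From mathcomp Require Import all_boot all_order all_algebra.
From mathcomp Require Import zify ring lra.
Import Order.TTheory GRing.Theory Num.Theory.
Set Implicit Arguments. Unset Strict Implicit. Unset Printing Implicit Defensive.
Local Open Scope ring_scope.

(* The inner product of a graph w_j + w_k with an alternating 4-cycle
   b_{i,j,k,s} telescopes to 0, so CPI and C are orthogonal, and hence
   independent since the inner product is definite.  For n >= 3 the map
   w |-> (w_j + w_k) is injective, so dim CPI = n.  For spanning, two edge
   indicators sharing a vertex b, say e_ab and e_cb, are congruent modulo
   CPI + C: for every u outside {a, c}, e_au - e_cu differs from
   e_ab - e_cb by the cycle b_{u,a,b,c}, and summing e_au - e_cu over all u
   gives the CPI graph of w = 1_a - 1_c.  Hence all edge indicators are
   congruent, and since their sum is the CPI graph of w = 1/2, each lies in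
   CPI + C.  Counting edges then gives dim C = n(n-1)/2 - n. *)

Lemma memv_pmulrn (K : numFieldType) (vT : vectType K) (U : {vspace vT})
    (v : vT) (k : nat) : (0 < k)%N -> (v *+ k \in U) = (v \in U).
Proof.
move=> k_gt0; apply/idP/idP => [vkU|]; last exact: rpredMn.
have -> : v = k%:R^-1 *: (v *+ k).
  by rewrite -scaler_nat scalerA mulVf ?scale1r // pnatr_eq0 -lt0n.
exact: memvZ.
Qed.

Lemma memv_sum_congr (K : numFieldType) (vT : vectType K) (U : {vspace vT})
    (I : finType) (P : {pred I}) (f : I -> vT) (v : vT) :
  (0 < #|P|)%N -> \sum_(i in P) f i \in U ->
  (forall i, i \in P -> f i - v \in U) -> v \in U.
Proof.
move=> P_gt0 sumU fvU; rewrite -(memv_pmulrn _ _ P_gt0) -sumr_const.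
rewrite -(subKr (\sum_(i in P) f i) (\sum_(i in P) v)) -sumrB.
exact/memvB/memv_suml.
Qed.

Lemma exists_ord_neq2 (n : nat) (a b : 'I_n) :
  (2 < n)%N -> exists c : 'I_n, (c != a) && (c != b).
Proof.
move=> n_gt2; have /card_gt0P[c] : (0 < #|~: [set a; b]|)%N.
  by have := cardsC [set a; b]; rewrite cards2 card_ord; case: (a != b); lia.
by rewrite !inE negb_or; exists c.
Qed.

Section Graphs.
Variables (R : realFieldType) (n : nat).
Local Notation graph := (graphS R n).
Implicit Types (x y : graph) (w : {ffun 'I_n -> R^o}) (a b p q : 'I_n).

Lemma same_edgeC a b p q : same_edge a b p q = same_edge a b q p.
Proof. by rewrite /same_edge orbC. Qed.

Lemma same_edgeCl a b p q : same_edge a b p q = same_edge b a p q.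
Proof.
by rewrite /same_edge orbC [(b == p) && _]andbC [(b == q) && _]andbC.
Qed.

Lemma same_edge_trans a b p q p' q' :
  same_edge a b p q -> same_edge a b p' q' -> same_edge p q p' q'.
Proof.
by rewrite /same_edge => /orP[]/andP[/eqP<- /eqP<-] /orP[]/andP[/eqP<- /eqP<-];
  rewrite !eqxx ?orbT.
Qed.

Lemma same_edge_out a b p q : a != p -> a != q -> same_edge a b p q = false.
Proof. by rewrite /same_edge => /negbTE-> /negbTE->. Qed.

Lemma edge_neq (e : edge n) : (val e).1 != (val e).2.
Proof. by rewrite -val_eqE ltn_eqF ?(valP e). Qed.

Lemma same_edge_val (e e' : edge n) :
  same_edge (val e).1 (val e).2 (val e').1 (val e').2 = (e == e').
Proof.
case: e e' => [[a b] /= ab] [[c d] /= cd].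
rewrite /same_edge [RHS](_ : _ = ((a, b) == (c, d))) // xpair_eqE.
case: (boolP ((a == c) && (b == d))) => //= _.
by apply/negbTE/negP => /andP[/eqP ad /eqP bc]; move: ab cd; rewrite ad bc; lia.
Qed.

Lemma card_edge : (#|{: edge n}|.*2 + n = n * n)%N.
Proof.
have card_lt : #|{: edge n}| = (\sum_(i < n) \sum_(j < n) (i < j))%N.
  rewrite card_sig -sum1_card big_mkcond pair_bigA /=.
  by apply: eq_bigr => p _; rewrite inE; case: ltnP.
have card_diag : (\sum_(i < n) \sum_(j < n) (i == j))%N = n.
  rewrite -[RHS]card_ord -sum1_card; apply: eq_bigr => i _.
  by rewrite (bigD1 i) //= eqxx big1 // => j /negbTE; rewrite eq_sym => ->.
rewrite -addnn {2}card_lt exchange_big /= card_lt -[X in (_ + X)%N]card_diag.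
rewrite -!big_split /=; transitivity (\sum_(i < n) \sum_(j < n) 1)%N.
  apply: eq_bigr => i _; rewrite -!big_split /=; apply: eq_bigr => j _.
  by rewrite -val_eqE /=; case: ltngtP.
under eq_bigr do rewrite big_const_ord iter_addn_0 mul1n.
by rewrite big_const_ord iter_addn_0.
Qed.

Lemma gdotC x y : gdot x y = gdot y x.
Proof. by apply: eq_bigr => e _; rewrite mulrC. Qed.

Lemma gdot_is_linear x : linear_for *%R (gdot x).
Proof.
move=> c y z; rewrite /gdot mulr_sumr -big_split; apply: eq_bigr => e _.
by rewrite !ffunE mulrDr mulrCA.
Qed.

HB.instance Definition _ x :=
  GRing.isLinear.Build R graph R *%R (gdot x) (gdot_is_linear x).

Lemma gdotxx_eq0 x : gdot x x = 0 -> x = 0.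
Proof.
move=> xx0; apply/ffunP => e; rewrite ffunE.
have /eqP := @psumr_eq0P _ _ xpredT _ (fun e _ => sqr_ge0 (x e : R)) xx0 e isT.
by rewrite mulf_eq0 orbb => /eqP.
Qed.

Definition edge_graph p q : graph :=
  [ffun e : edge n => (same_edge (val e).1 (val e).2 p q)%:R].

Lemma edge_graphC p q : edge_graph p q = edge_graph q p.
Proof. by apply/ffunP => e; rewrite !ffunE same_edgeC. Qed.

Lemma edge_graph_loop p : edge_graph p p = 0.
Proof.
apply/ffunP => e; rewrite !ffunE /same_edge orbb; apply/eqP.
by rewrite pnatr_eq0 eqb0; apply: contra (edge_neq e) => /andP[/eqP-> /eqP->].
Qed.

Lemma edge_graph_val (e : edge n) :
  edge_graph (val e).1 (val e).2 = [ffun e' => (e' == e)%:R].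
Proof. by apply/ffunP => e'; rewrite !ffunE same_edge_val. Qed.

Lemma cpi_graph_is_linear : linear (@cpi_graph R n).
Proof. by move=> c w w'; apply/ffunP => e; rewrite !ffunE scalerDr addrACA. Qed.

HB.instance Definition _ :=
  GRing.isLinear.Build R {ffun 'I_n -> R^o} graph *:%R (@cpi_graph R n)
    cpi_graph_is_linear.

Lemma memv_CPI x : reflect (exists w, x = cpi_graph w) (x \in CPI_S R n).
Proof.
by apply: (iffP memv_imgP) => [[w _ ->]|[w ->]]; exists w; rewrite ?lfunE ?memvf.
Qed.

Lemma gdot_cpi_edge_graph w p q :
  p != q -> gdot (cpi_graph w) (edge_graph p q) = w p + w q.
Proof.
wlog lt_pq : p q / (p < q)%N => [wlog_pq pq|_].
  case: (ltngtP p q) => [lt_pq|lt_qp|/val_inj eq_pq]; first exact: wlog_pq.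
    by rewrite edge_graphC addrC wlog_pq // eq_sym.
  by rewrite eq_pq eqxx in pq.
pose e : edge n := exist _ (p, q) lt_pq.
rewrite -[edge_graph p q]/(edge_graph (val e).1 (val e).2) edge_graph_val.
rewrite /gdot (bigD1 e) //= big1 => [|e' /negbTE ne]; rewrite !ffunE ?ne ?mulr0 //.
by rewrite eqxx mulr1 addr0.
Qed.

Lemma cpi_graph_eq0 w : (2 < n)%N -> cpi_graph w = 0 -> w = 0.
Proof.
move=> n_gt2 w0; apply/ffunP => v; rewrite ffunE.
have [u /andP[uv _]] := exists_ord_neq2 v v n_gt2.
have [t /andP[tv tu]] := exists_ord_neq2 v u n_gt2.
have sum0 p q : p != q -> w p + w q = 0.
  by move=> pq; rewrite -gdot_cpi_edge_graph // w0 gdotC linear0.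
have := sum0 _ _ uv; have := sum0 _ _ tv; have := sum0 _ _ tu; lra.
Qed.

Lemma dim_CPI : (2 < n)%N -> \dim (CPI_S R n) = n.
Proof.
move=> n_gt2; rewrite limg_dim_eq ?dimvf /dim /= ?card_ord ?muln1 //.
apply/eqP; rewrite -subv0; apply/subvP => w.
by rewrite memv_cap memv_ker memv0 lfunE => /andP[_ /eqP/cpi_graph_eq0->].
Qed.

Lemma bvecE i j k s : distinct4 (i, j, k, s) ->
  bvec R i j k s =
    edge_graph i j - edge_graph j k + edge_graph k s - edge_graph s i.
Proof.
case/and5P=> ij ik iS jk /andP[js ks].
have ji : j != i by rewrite eq_sym.
have ki : k != i by rewrite eq_sym.
have apart p q p' q' a b : same_edge p q p' q' = false ->
    same_edge a b p q -> same_edge a b p' q' = false.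
  move=> pq_p'q' abpq; apply/negbTE; apply: contraFN pq_p'q'.
  exact: same_edge_trans.
have ij_jk := same_edge_out j ij ik; have ij_ks := same_edge_out j ik iS.
have ij_si : same_edge i j s i = false by rewrite same_edgeCl same_edge_out.
have jk_ks := same_edge_out k jk js; have jk_si := same_edge_out k js ji.
have ks_si := same_edge_out s ks ki.
apply/ffunP => e; rewrite !ffunE /=; set a := (val e).1; set b := (val e).2.
have [e_ij|_] := boolP (same_edge a b i j).
  by rewrite !(apart _ _ _ _ _ _ _ e_ij) // !(subr0, addr0).
have [e_jk|_] := boolP (same_edge a b j k).
  by rewrite !(apart _ _ _ _ _ _ _ e_jk) // !(subr0, addr0, add0r).
have [e_ks|_] := boolP (same_edge a b k s).
  by rewrite !(apart _ _ _ _ _ _ _ e_ks) // !(subr0, addr0, sub0r, add0r).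
by case: (same_edge a b s i); rewrite !(subr0, addr0, sub0r, add0r).
Qed.

Lemma gdot_cpi_bvec w i j k s :
  distinct4 (i, j, k, s) -> gdot (cpi_graph w) (bvec R i j k s) = 0.
Proof.
move=> ijks; rewrite bvecE // !(linearD, linearN) /=.
case/and5P: ijks => ij ik iS jk /andP[js ks]; have si : s != i by rewrite eq_sym.
by rewrite !gdot_cpi_edge_graph //; ring.
Qed.

Lemma bvec_in_C i j k s : distinct4 (i, j, k, s) -> bvec R i j k s \in C_S R n.
Proof.
by move=> ijks; apply/memv_span/mapP; exists (i, j, k, s); rewrite ?mem_enum.
Qed.

Lemma gdot_CPI_C x y : x \in CPI_S R n -> y \in C_S R n -> gdot x y = 0.
Proof.
move=> /memv_CPI[w ->] /coord_span->; rewrite linear_sum big1 // => m _.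
set b := _`_m; have /mapP[[[[i j] k] s]] : b \in
    [seq (let: (i, j, k, s) := t in bvec R i j k s) | t <- enum (@distinct4 n)].
  by rewrite mem_nth ?size_tuple.
by rewrite mem_enum => ijks ->; rewrite linearZ /= gdot_cpi_bvec ?mulr0.
Qed.

Lemma CPI_cap_C : (CPI_S R n :&: C_S R n)%VS = 0%VS.
Proof.
apply/eqP; rewrite -subv0; apply/subvP => x.
by rewrite memv_cap memv0 => /andP[xP xC]; apply/eqP/gdotxx_eq0/gdot_CPI_C.
Qed.

Lemma edge_graph_star p :
  \sum_q edge_graph p q = cpi_graph [ffun v => (v == p)%:R].
Proof.
have sum_eq1 c : (\sum_(u : 'I_n) (c == u) = 1)%N.
  by rewrite (bigD1 c) //= eqxx big1 // => u /negbTE; rewrite eq_sym => ->.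
apply/ffunP => e; rewrite sum_ffunE !ffunE -natrD; under eq_bigr do rewrite ffunE.
rewrite -natr_sum; congr _%:R; move: (edge_neq e); rewrite /same_edge.
case: e => [[a b] /= _] ab; have [<-|ap] := eqVneq a p.
  rewrite [b == a]eq_sym (negbTE ab); under eq_bigr do rewrite andbF orbF.
  exact: sum_eq1.
have [->|_] /= := eqVneq b p.
  by under eq_bigr do rewrite andbT; exact: sum_eq1.
by rewrite big1 // => u; rewrite andbF.
Qed.

Local Notation CPIC := (CPI_S R n + C_S R n)%VS.

Lemma edge_graph_shift_mem a b c : a != b -> c != b -> a != c ->
  edge_graph a b - edge_graph c b \in CPIC.
Proof.
move=> ab cb ac; pose g u := edge_graph a u - edge_graph c u.
pose P := [pred u | (u != a) && (u != c)].
apply: (@memv_sum_congr _ _ _ _ P g).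
- by apply/card_gt0P; exists b; rewrite !inE ![b == _]eq_sym ab cb.
- have gac : g a + g c = 0.
    by rewrite /g !edge_graph_loop (edge_graphC a c) sub0r subr0 addNr.
  have : \sum_u g u \in CPIC.
    rewrite sumrB !edge_graph_star -linearB; apply: (subvP (addvSl _ _)).
    by apply/memv_CPI; eexists.
  by rewrite (bigD1 a) // (bigD1 c) 1?eq_sym //= addrA gac add0r.
move=> u /andP[ua uc]; apply: (subvP (addvSr _ _)).
have [->|ub] := eqVneq u b; first by rewrite subrr mem0v.
have uabc : distinct4 (u, a, b, c).
  by rewrite /distinct4 ua ub uc ab ac eq_sym cb.
suff -> : g u - (edge_graph a b - edge_graph c b) = bvec R u a b c.
  exact: bvec_in_C.
rewrite bvecE // /g (edge_graphC u a) (edge_graphC b c).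
by apply/ffunP => e; rewrite !ffunE; ring.
Qed.

Lemma edge_graph_sub_mem a b c d : a != b -> c != d ->
  edge_graph a b - edge_graph c d \in CPIC.
Proof.
have shift p q r : p != q -> r != q -> edge_graph p q - edge_graph r q \in CPIC.
  move=> pq rq; have [->|pr] := eqVneq p r; first by rewrite subrr mem0v.
  exact: edge_graph_shift_mem.
move=> ab; have [<- bd|bc cd] := eqVneq b c.
  by rewrite (edge_graphC b d); apply: shift; rewrite // eq_sym.
rewrite -[_ - _](subrKA (edge_graph c b)) {2}(edge_graphC c b) (edge_graphC c d).
by apply: memvD; apply: shift; rewrite // eq_sym.
Qed.

Lemma edge_graph_val_mem (e : edge n) : edge_graph (val e).1 (val e).2 \in CPIC.
Proof.
pose f (e' : edge n) := edge_graph (val e').1 (val e').2.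
apply: (@memv_sum_congr _ _ _ _ predT f).
- by apply/card_gt0P; exists e.
- have -> : \sum_(e' in predT) f e' = cpi_graph [ffun=> 2^-1].
    apply/ffunP => e'; rewrite sum_ffunE !ffunE -[2^-1 : R]mul1r -splitr.
    under eq_bigr do rewrite /f edge_graph_val ffunE eq_sym.
    by rewrite -natr_sum (bigD1 e') //= eqxx big1 // => e'' /negbTE->.
  by apply: (subvP (addvSl _ _)); apply/memv_CPI; eexists.
by move=> e' _; apply: edge_graph_sub_mem; exact: edge_neq.
Qed.

Lemma CPI_add_C_full : CPIC = fullv.
Proof.
apply/eqP; rewrite eqEsubv subvf; apply/subvP => x _.
have -> : x = \sum_(e : edge n) x e *: edge_graph (val e).1 (val e).2.
  apply/ffunP => e; rewrite sum_ffunE (bigD1 e) //= big1 => [|e' /negbTE ne];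
    rewrite !ffunE ?same_edge_val ?eqxx.
    by rewrite addr0; exact: (esym (mulr1 _)).
  by rewrite eq_sym ne; exact: mulr0.
by apply: memv_suml => e _; apply/memvZ/edge_graph_val_mem.
Qed.

Lemma dim_C : (2 < n)%N -> \dim (C_S R n) = (n * (n - 3) %/ 2)%N.
Proof.
move=> n_gt2; have := dimv_disjoint_sum CPI_cap_C.
rewrite CPI_add_C_full dimvf /dim /= muln1 dim_CPI // => dim_sum.
have := card_edge; rewrite dim_sum => card.
by rewrite (_ : n * (n - 3) = \dim (C_S R n) * 2)%N ?mulnK //; nia.
Qed.

End Graphs.

Theorem theorem11 (R : realFieldType) (n : nat) : (4 <= n)%N ->
  [/\ (\dim (CPI_S R n) = n /\ \dim (C_S R n) = (n * (n - 3)) %/ 2)%N,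
      (CPI_S R n + C_S R n)%VS = fullv,
      directv (CPI_S R n + C_S R n)%VS,
      (forall x y : graphS R n, x \in CPI_S R n -> y \in C_S R n -> gdot x y = 0)
    & forall G : graphS R n,
      exists Gcpi : graphS R n, exists Gcyc : graphS R n,
        [/\ [/\ Gcpi \in CPI_S R n, Gcyc \in C_S R n & G = Gcpi + Gcyc],
            (forall Gcpi' Gcyc' : graphS R n, Gcpi' \in CPI_S R n ->
               Gcyc' \in C_S R n -> G = Gcpi' + Gcyc' ->
               Gcpi' = Gcpi /\ Gcyc' = Gcyc),
            (forall u : graphS R n, u \in CPI_S R n -> gdot (G - Gcpi) u = 0)
          & (forall u : graphS R n, u \in C_S R n -> gdot (G - Gcyc) u = 0)]].
Proof.
move=> n_ge4; have n_gt2 : (2 < n)%N := ltnW n_ge4.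
have direct : directv (CPI_S R n + C_S R n) by apply/directv_addP/CPI_cap_C.
split=> //; [by rewrite dim_CPI ?dim_C | exact: CPI_add_C_full | exact: gdot_CPI_C |].
move=> G; have /memv_addP[a aP [b bC ->]] : G \in (CPI_S R n + C_S R n)%VS.
  by rewrite CPI_add_C_full memvf.
exists a, b; split=> // [a' b' a'P b'C /eqP|u uP|u uC].
- by rewrite (directv_add_unique direct) // xpair_eqE => /andP[/eqP-> /eqP->].
- by rewrite [a + b]addrC addrK gdotC; exact: gdot_CPI_C.
- by rewrite addrK; exact: gdot_CPI_C.
Qed.
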